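(* Let $X,Y$ be Banach spaces, $F:X\rightrightarrows Y$ a set-valued mapping with locally closed graph, and $(\bar x,\bar y)\in\operatorname{gr}F$. Suppose there are a neighborhood $W$ of $(\bar x,\bar y)$ and numbers $c>0$, $\lambda\in[0,1)$ such that for every $(x,y)\in W\cap\operatorname{gr}F$, $$\sup_{z\in S_Y} d\big(z,\ DF(x,y)(cB_X)\big)\le\lambda.$$ Then $\operatorname{sur}F(\bar x|\bar y)\ge\frac{1-\lambda}{c}$.
   Context: $S_Y$ is the unit sphere, $B_X$ the closed unit ball. The contingent cone $T(Q,z)$ to $Q$ at $z\in Q$ is the set of $h$ for which there are $t_k\searrow0$, $h_k\to h$ with $z+t_kh_k\in Q$. The contingent derivative is $DF(x,y)(h)=\{v:(h,v)\in T(\operatorname{gr}F,(x,y))\}$, and $DF(x,y)(cB_X)=\bigcup_{\|h\|\le c}DF(x,y)(h)$. $\operatorname{sur}F(\bar x|\bar y)$ is the supremum of $r>0$ for which there is $\varepsilon>0$ with $B(y,rt)\cap B(\bar y,\varepsilon)\subset F(B(x,t))$ for all $(x,y)\in\operatorname{gr}F$ with $\|x-\bar x\|<\varepsilon$ and all $t\ge0$ ($0$ if none). *)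

From Stdlib Require Import Reals Lra.
Open Scope R_scope.
Set Implicit Arguments.

Record NormedSpace := {
  ns_car :> Type;
  ns_zero : ns_car;
  ns_add : ns_car -> ns_car -> ns_car;
  ns_opp : ns_car -> ns_car;
  ns_scal : R -> ns_car -> ns_car;
  ns_norm : ns_car -> R;
  ns_addA : forall x y z, ns_add x (ns_add y z) = ns_add (ns_add x y) z;
  ns_addC : forall x y, ns_add x y = ns_add y x;
  ns_add0 : forall x, ns_add ns_zero x = x;
  ns_addN : forall x, ns_add (ns_opp x) x = ns_zero;
  ns_scalA : forall a b x, ns_scal a (ns_scal b x) = ns_scal (a * b) x;
  ns_scal1 : forall x, ns_scal 1 x = x;
  ns_scalDr : forall a x y, ns_scal a (ns_add x y) = ns_add (ns_scal a x) (ns_scal a y);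
  ns_scalDl : forall a b x, ns_scal (a + b) x = ns_add (ns_scal a x) (ns_scal b x);
  ns_norm_ge0 : forall x, 0 <= ns_norm x;
  ns_norm_eq0 : forall x, ns_norm x = 0 -> x = ns_zero;
  ns_normZ : forall a x, ns_norm (ns_scal a x) = Rabs a * ns_norm x;
  ns_normD : forall x y, ns_norm (ns_add x y) <= ns_norm x + ns_norm y
}.

Arguments ns_zero {_}.
Arguments ns_add {_}.
Arguments ns_opp {_}.
Arguments ns_scal {_}.
Arguments ns_norm {_}.

Definition ns_sub {X : NormedSpace} (x y : X) : X := ns_add x (ns_opp y).
Definition ns_dist {X : NormedSpace} (x y : X) : R := ns_norm (ns_sub x y).

Definition seq_lim {X : NormedSpace} (u : nat -> X) (l : X) : Prop :=
  forall eps, 0 < eps -> exists N, forall n, (N <= n)%nat -> ns_dist (u n) l < eps.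

Definition seq_cauchy {X : NormedSpace} (u : nat -> X) : Prop :=
  forall eps, 0 < eps -> exists N, forall m n, (N <= m)%nat -> (N <= n)%nat ->
    ns_dist (u m) (u n) < eps.

Record BanachSpace := {
  bs_ns :> NormedSpace;
  bs_complete : forall u : nat -> bs_ns, seq_cauchy u -> exists l, seq_lim u l
}.

(* Set-valued maps F : X =>> Y are given by their graph relation F x y (y in F x). *)

(* gr F is a locally closed subset of X x Y (product metric = max of the norms):
   every point of gr F has a closed ball whose intersection with gr F is closed
   (closedness expressed sequentially, which is equivalent in metric spaces). *)
Definition graph_locally_closed {X Y : NormedSpace} (F : X -> Y -> Prop) : Prop :=
  forall x0 y0, F x0 y0 -> exists r, 0 < r /\
    forall (u : nat -> X) (w : nat -> Y) x y,
      (forall n, F (u n) (w n) /\ ns_dist (u n) x0 <= r /\ ns_dist (w n) y0 <= r) ->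
      seq_lim u x -> seq_lim w y -> ns_dist x x0 <= r -> ns_dist y y0 <= r -> F x y.

(* Contingent derivative: v in DF(x,y)(h) iff (h,v) in T(gr F,(x,y)), i.e. there are
   t_k decreasing to 0 (t_k > 0) and (h_k, v_k) -> (h, v) with (x,y) + t_k (h_k,v_k) in gr F. *)
Definition contingent_derivative {X Y : NormedSpace} (F : X -> Y -> Prop)
  (x : X) (y : Y) (h : X) (v : Y) : Prop :=
  exists (t : nat -> R) (hk : nat -> X) (vk : nat -> Y),
    (forall k, 0 < t k) /\ (forall k, t (S k) <= t k) /\ Un_cv t 0 /\
    seq_lim hk h /\ seq_lim vk v /\
    (forall k, F (ns_add x (ns_scal (t k) (hk k))) (ns_add y (ns_scal (t k) (vk k)))).

Definition DF_image_ball {X Y : NormedSpace} (F : X -> Y -> Prop)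
  (x : X) (y : Y) (c : R) (v : Y) : Prop :=
  exists h, ns_norm h <= c /\ contingent_derivative F x y h v.

(* d(z, A) <= l, where d(z,A) = inf_{a in A} ||z - a|| (= +infinity if A is empty). *)
Definition dist_set_le {Y : NormedSpace} (z : Y) (A : Y -> Prop) (l : R) : Prop :=
  forall eps, 0 < eps -> exists a, A a /\ ns_dist z a < l + eps.

(* r is admissible in the definition of sur F(xb|yb):
   exists eps > 0 s.t. B(y, r t) /\ B(yb, eps) is contained in F(B(x,t))
   for all (x,y) in gr F with ||x - xb|| < eps and all t >= 0 (open balls). *)
Definition sur_admissible {X Y : NormedSpace} (F : X -> Y -> Prop)
  (xb : X) (yb : Y) (r : R) : Prop :=
  exists eps, 0 < eps /\
    forall x y t, F x y -> ns_dist x xb < eps -> 0 <= t ->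
      forall v, ns_dist v y < r * t -> ns_dist v yb < eps ->
        exists u, ns_dist u x < t /\ F u v.

(* sur F(xb|yb) = sup { r > 0 | r admissible } (0 if the set is empty; possibly +infinity).
   sur_ge F xb yb a  <->  sur F(xb|yb) >= a  (unfolding of sup(S u {0}) >= a). *)
Definition sur_ge {X Y : NormedSpace} (F : X -> Y -> Prop)
  (xb : X) (yb : Y) (a : R) : Prop :=
  forall s, s < a -> s < 0 \/ exists r, 0 < r /\ s < r /\ sur_admissible F xb yb r.

(* Fix r with r c < 1 - lam.  Close to (xb, yb) the graph of F is complete for the metric
   |x - x'| + al |y - y'|, so Ekeland's principle applied to (x', y') |-> |y' - v| from a graph
   point (x, y) yields (u, w) in gr F with r |u - x| <= |y - v| such that no nearby graph
   point decreases |. - v| by more than r times its distance to (u, w).  If w <> v, the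
   hypothesis gives a contingent direction (h, a) with |h| <= c and a within lam of the unit
   vector from w to v; moving along it decreases |w - v| at rate about 1 - lam at a cost
   of about r c, which contradicts Ekeland since r c < 1 - lam.  So w = v: F is metrically
   regular with modulus 1/r around (xb, yb), and metric regularity yields openness at rate r
   (points y far from yb are handled by solving from (xb, yb) instead). *)

From Stdlib Require Import Reals Lra Lia Classical ClassicalEpsilon.
Open Scope R_scope.

Section NormedSpaceFacts.
Context {X : NormedSpace}.
Implicit Types x y z u v w a b : X.

Lemma ns_addr0 x : ns_add x ns_zero = x.
Proof. rewrite ns_addC. apply ns_add0. Qed.

Lemma ns_addrN x : ns_add x (ns_opp x) = ns_zero.
Proof. rewrite ns_addC. apply ns_addN. Qed.

Lemma ns_addrI a x y : ns_add a x = ns_add a y -> x = y.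
Proof.
  intros H. rewrite <- (ns_add0 _ x), <- (ns_add0 _ y), <- (ns_addN _ a).
  rewrite <- !ns_addA, H. reflexivity.
Qed.

Lemma ns_scal0 x : ns_scal 0 x = ns_zero.
Proof.
  apply (ns_addrI (ns_scal 0 x)). rewrite ns_addr0, <- ns_scalDl. f_equal; ring.
Qed.

Lemma ns_oppE x : ns_opp x = ns_scal (-1) x.
Proof.
  apply (ns_addrI x). rewrite ns_addrN. rewrite <- (ns_scal1 _ x) at 1.
  rewrite <- ns_scalDl. replace (1 + -1) with 0 by ring. symmetry; apply ns_scal0.
Qed.

Lemma ns_norm0 : ns_norm (@ns_zero X) = 0.
Proof. rewrite <- (ns_scal0 ns_zero), ns_normZ, Rabs_R0. ring. Qed.

Lemma ns_normN x : ns_norm (ns_opp x) = ns_norm x.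
Proof. rewrite ns_oppE, ns_normZ, Rabs_left by lra. ring. Qed.

Lemma ns_normZ_nonneg t x : 0 <= t -> ns_norm (ns_scal t x) = t * ns_norm x.
Proof. intros Ht. rewrite ns_normZ, Rabs_pos_eq; auto. Qed.

Lemma ns_distC x y : ns_dist x y = ns_dist y x.
Proof.
  unfold ns_dist. rewrite <- ns_normN. f_equal. unfold ns_sub.
  rewrite !ns_oppE, ns_scalDr, ns_scalA.
  replace (-1 * -1) with 1 by ring. rewrite ns_scal1, ns_addC. reflexivity.
Qed.

Lemma ns_dist_xx x : ns_dist x x = 0.
Proof. unfold ns_dist, ns_sub. rewrite ns_addrN. apply ns_norm0. Qed.

Lemma ns_dist_ge0 x y : 0 <= ns_dist x y.
Proof. apply ns_norm_ge0. Qed.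

Lemma ns_dist_triangle x y z : ns_dist x z <= ns_dist x y + ns_dist y z.
Proof.
  unfold ns_dist.
  replace (ns_sub x z) with (ns_add (ns_sub x y) (ns_sub y z)) by
    (unfold ns_sub; rewrite ns_addA, <- (ns_addA _ x (ns_opp y) y), ns_addN, ns_addr0;
     reflexivity).
  apply ns_normD.
Qed.

Lemma ns_dist_eq0 x y : ns_dist x y = 0 -> x = y.
Proof.
  intros H. apply ns_norm_eq0 in H. unfold ns_sub in H.
  rewrite <- (ns_addr0 x), <- (ns_addN _ y), ns_addA, H. apply ns_add0.
Qed.

Lemma ns_dist0r x : ns_dist x ns_zero = ns_norm x.
Proof.
  unfold ns_dist, ns_sub. rewrite ns_oppE, <- (ns_scal0 ns_zero) at 1.
  rewrite ns_scalA, Rmult_0_r, ns_scal0, ns_addr0. reflexivity.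
Qed.

Lemma ns_norm_le_dist a b : ns_norm a <= ns_norm b + ns_dist a b.
Proof. rewrite <- !ns_dist0r, Rplus_comm. apply ns_dist_triangle. Qed.

Lemma ns_dist_addl u a : ns_dist (ns_add u a) u = ns_norm a.
Proof.
  unfold ns_dist, ns_sub.
  rewrite <- ns_addA, (ns_addC _ a), ns_addA, ns_addrN, ns_add0. reflexivity.
Qed.

Lemma seq_lim_dist_le {s : nat -> X} {l x0 rho} :
  seq_lim s l -> (forall n, ns_dist (s n) x0 <= rho) -> ns_dist l x0 <= rho.
Proof.
  intros Hl Hb. apply Rle_plus_epsilon. intros e He.
  destruct (Hl e He) as [N HN]. specialize (HN N (le_n N)).
  pose proof (ns_dist_triangle l (s N) x0). rewrite ns_distC in HN.
  specialize (Hb N). lra.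
Qed.

Definition direction w v : X := ns_scal (- / ns_dist w v) (ns_sub w v).

Lemma ns_norm_direction w v : 0 < ns_dist w v -> ns_norm (direction w v) = 1.
Proof.
  intros Hn. unfold direction. rewrite ns_normZ. fold (ns_dist w v).
  rewrite Rabs_Ropp, Rabs_pos_eq by (left; apply Rinv_0_lt_compat; exact Hn).
  field. lra.
Qed.

Lemma ns_dist_step_toward w v a t : 0 <= t <= ns_dist w v -> 0 < ns_dist w v ->
  ns_dist (ns_add w (ns_scal t a)) v <= ns_dist w v - t + t * ns_dist a (direction w v).
Proof.
  intros [Ht0 Htn] Hn. set (n := ns_dist w v) in *.
  assert (Hsplit : ns_sub (ns_add w (ns_scal t a)) v =
    ns_add (ns_scal (1 - t / n) (ns_sub w v)) (ns_scal t (ns_sub a (direction w v)))).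
  { unfold direction, ns_sub at 3. fold n.
    rewrite ns_scalDr, ns_oppE, !ns_scalA.
    rewrite (ns_addC _ (ns_scal t a)), ns_addA, <- ns_scalDl.
    replace (1 - t / n + t * -1 * - / n) with 1 by (field; lra).
    rewrite ns_scal1. unfold ns_sub.
    rewrite <- ns_addA, (ns_addC _ (ns_scal t a)), ns_addA. reflexivity. }
  assert (Hratio : t / n <= 1) by (apply (Rmult_le_reg_r n); auto; field_simplify; lra).
  unfold ns_dist at 1. rewrite Hsplit.
  eapply Rle_trans; [apply ns_normD|].
  rewrite !ns_normZ_nonneg by lra. fold n.
  change (ns_norm (ns_sub w v)) with n. change (ns_norm (ns_sub a (direction w v))) with (ns_dist a (direction w v)).
  right. field. lra.
Qed.

End NormedSpaceFacts.

Lemma exists_inv_INR_succ_lt e : 0 < e -> exists N, / (INR N + 1) < e.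
Proof.
  intros He. destruct (archimed_cor1 e He) as [N [HN HN0]].
  exists N. apply Rle_lt_trans with (/ INR N); auto.
  apply Rinv_le_contravar; [apply lt_0_INR; exact HN0 | lra].
Qed.

Lemma Rmult_le_of_le_div a b t : 0 < b -> t <= a / b -> t * b <= a.
Proof.
  intros Hb Ht. replace a with (a / b * b) by (field; lra).
  apply Rmult_le_compat_r; lra.
Qed.

Lemma Rle_plus_mul_epsilon a b k :
  0 <= k -> (forall e, 0 < e -> a <= b + k * e) -> a <= b.
Proof.
  intros Hk H. apply Rle_plus_epsilon. intros e He.
  assert (Hke : k * (e / (k + 1)) <= e).
  { apply (Rmult_le_reg_r (k + 1)); [lra|].
    replace (k * (e / (k + 1)) * (k + 1)) with (k * e) by (field; lra). nra. }
  pose proof (H (e / (k + 1)) ltac:(apply Rdiv_lt_0_compat; lra)). lra.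
Qed.

Section Ekeland.

Variables (P : Type) (D : P -> P -> R) (G : P -> Prop) (f : P -> R) (K r : R).
Hypothesis D_sym : forall p q, D p q = D q p.
Hypothesis D_triangle : forall p q s, D p s <= D p q + D q s.
Hypothesis D_xx : forall p, D p p = 0.
Hypothesis D_ge0 : forall p q, 0 <= D p q.
Hypothesis G_complete : forall s : nat -> P, (forall n, G (s n)) ->
  (forall e, 0 < e -> exists N, forall m n, (N <= m)%nat -> (N <= n)%nat -> D (s m) (s n) < e) ->
  exists l, G l /\ forall e, 0 < e -> exists N, forall n, (N <= n)%nat -> D (s n) l < e.
Hypothesis f_ge0 : forall p, 0 <= f p.
Hypothesis K_ge0 : 0 <= K.
Hypothesis f_lipschitz : forall p q, f p - f q <= K * D p q.
Hypothesis r_gt0 : 0 < r.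

Definition ekeland_set (p q : P) : Prop := G q /\ f q + r * D q p <= f p.

Lemma ekeland_set_refl p : G p -> ekeland_set p p.
Proof. intros Gp. split; auto. rewrite D_xx. lra. Qed.

Lemma ekeland_set_trans {p q s} : ekeland_set p q -> ekeland_set q s -> ekeland_set p s.
Proof.
  intros [Gq Hq] [Gs Hs]. split; auto. pose proof (D_triangle s q p). nra.
Qed.

Lemma ekeland_set_near_inf p n : exists q, G p ->
  ekeland_set p q /\ forall q', ekeland_set p q' -> f q - / (INR n + 1) <= f q'.
Proof.
  destruct (classic (G p)) as [Gp|nGp]; [|exists p; tauto].
  set (E := fun a => exists q, ekeland_set p q /\ a = - f q).
  assert (Hb : bound E).
  { exists 0. intros a [q [_ ->]]. pose proof (f_ge0 q). lra. }
  assert (Hne : exists a, E a) by (exists (- f p); exists p; split; auto using ekeland_set_refl).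
  destruct (completeness E Hb Hne) as [m [Hub Hlub]].
  pose proof (RinvN_pos n) as Hen.
  destruct (classic (exists q, ekeland_set p q /\ m - / (INR n + 1) < - f q))
    as [[q [Sq Hq]]|Hno].
  - exists q. intros _. split; auto. intros q' Sq'.
    assert (Hq' : E (- f q')) by (exists q'; auto). pose proof (Hub _ Hq'). lra.
  - exfalso. assert (Hup : is_upper_bound E (m - / (INR n + 1))).
    { intros a [q [Sq ->]]. apply Rnot_lt_le. intros Hlt. apply Hno. exists q. auto. }
    pose proof (Hlub _ Hup). lra.
Qed.

Definition ekeland_next (p : P) (n : nat) : P :=
  proj1_sig (constructive_indefinite_description _ (ekeland_set_near_inf p n)).

Lemma ekeland_nextP p n : G p ->
  ekeland_set p (ekeland_next p n) /\
  forall q, ekeland_set p q -> f (ekeland_next p n) - / (INR n + 1) <= f q.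
Proof. exact (proj2_sig (constructive_indefinite_description _ (ekeland_set_near_inf p n))). Qed.

Variables (p0 : P).
Hypothesis G_p0 : G p0.

Fixpoint ekeland_seq (n : nat) : P :=
  match n with O => p0 | S k => ekeland_next (ekeland_seq k) k end.

Lemma ekeland_seq_G n : G (ekeland_seq n).
Proof. induction n; simpl; [exact G_p0 | apply (ekeland_nextP _ _ IHn)]. Qed.

Lemma ekeland_seq_mono {m n} : (m <= n)%nat -> ekeland_set (ekeland_seq m) (ekeland_seq n).
Proof.
  induction 1; [apply ekeland_set_refl, ekeland_seq_G|].
  eapply ekeland_set_trans; [eassumption|]. apply (ekeland_nextP _ _ (ekeland_seq_G m0)).
Qed.

Lemma ekeland_set_radius {N q} :
  ekeland_set (ekeland_seq (S N)) q -> r * D q (ekeland_seq (S N)) <= / (INR N + 1).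
Proof.
  intros Sq. destruct (ekeland_nextP _ N (ekeland_seq_G N)) as [SN Hmin].
  pose proof (Hmin q (ekeland_set_trans SN Sq)). destruct Sq as [_ Hq]. simpl in *. lra.
Qed.

Lemma ekeland_set_diam {N q q'} :
  ekeland_set (ekeland_seq (S N)) q -> ekeland_set (ekeland_seq (S N)) q' ->
  r * D q q' <= 2 * / (INR N + 1).
Proof.
  intros Sq Sq'. pose proof (ekeland_set_radius Sq). pose proof (ekeland_set_radius Sq').
  pose proof (D_triangle q (ekeland_seq (S N)) q') as Htri.
  rewrite (D_sym (ekeland_seq (S N)) q') in Htri.
  apply Rle_trans with (r * (D q (ekeland_seq (S N)) + D q' (ekeland_seq (S N)))); [|lra].
  apply Rmult_le_compat_l; lra.
Qed.

Lemma ekeland_seq_cauchy e : 0 < e -> exists N, forall m n, (N <= m)%nat -> (N <= n)%nat ->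
  D (ekeland_seq m) (ekeland_seq n) < e.
Proof.
  intros He. destruct (exists_inv_INR_succ_lt (e * r / 2)) as [N HN]; [nra|].
  exists (S N). intros m n Hm Hn.
  pose proof (ekeland_set_diam (ekeland_seq_mono Hm) (ekeland_seq_mono Hn)).
  apply (Rmult_lt_reg_l r); lra.
Qed.

Lemma ekeland_set_limit {l} : (forall e, 0 < e -> exists N, forall n, (N <= n)%nat ->
  D (ekeland_seq n) l < e) -> G l -> forall n, ekeland_set (ekeland_seq n) l.
Proof.
  intros Hl Gl n. split; auto. apply (Rle_plus_mul_epsilon _ _ (K + r)); [lra|].
  intros e He. destruct (Hl e He) as [N HN].
  set (m := Nat.max n N). specialize (HN m (Nat.le_max_r _ _)).
  destruct (ekeland_seq_mono (Nat.le_max_l n N)) as [_ Hm]. fold m in Hm.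
  pose proof (f_lipschitz l (ekeland_seq m)).
  pose proof (D_triangle l (ekeland_seq m) (ekeland_seq n)).
  rewrite (D_sym l (ekeland_seq m)) in *. nra.
Qed.

Theorem ekeland : exists ps, G ps /\ f ps + r * D ps p0 <= f p0 /\
  forall q, G q -> f ps <= f q + r * D q ps.
Proof.
  destruct (G_complete ekeland_seq ekeland_seq_G ekeland_seq_cauchy) as [l [Gl Hl]].
  pose proof (ekeland_set_limit Hl Gl) as Sl.
  exists l. split; [exact Gl|]. split; [exact (proj2 (Sl O))|].
  intros q Gq. apply Rnot_lt_le. intros Hlt.
  assert (Sq : forall n, ekeland_set (ekeland_seq n) q)
    by (intros n; apply (ekeland_set_trans (Sl n)); split; [exact Gq | lra]).
  (* [q] and [l] lie in every set of the shrinking nested family, so they coincide. *)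
  assert (Hql : D q l <= 0).
  { apply Rle_plus_epsilon. intros e He.
    destruct (exists_inv_INR_succ_lt (e * r / 2)) as [N HN]; [nra|].
    pose proof (ekeland_set_diam (Sq (S N)) (Sl (S N))).
    assert (Hre : r * D q l < r * e) by lra.
    apply Rmult_lt_reg_l in Hre; lra. }
  pose proof (f_lipschitz l q) as Hlip. rewrite (D_sym l q) in Hlip.
  pose proof (D_ge0 q l). nra.
Qed.

End Ekeland.

Section WeightedProduct.
Context {X Y : NormedSpace}.
Implicit Types p q s : X * Y.

Definition weighted_dist (a : R) p q : R :=
  ns_dist (fst p) (fst q) + a * ns_dist (snd p) (snd q).

Lemma weighted_distC a p q : weighted_dist a p q = weighted_dist a q p.
Proof. unfold weighted_dist. rewrite (ns_distC (fst p)), (ns_distC (snd p)). reflexivity. Qed.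

Lemma weighted_dist_triangle a p q s : 0 <= a ->
  weighted_dist a p s <= weighted_dist a p q + weighted_dist a q s.
Proof.
  intros Ha. unfold weighted_dist.
  pose proof (ns_dist_triangle (fst p) (fst q) (fst s)).
  pose proof (ns_dist_triangle (snd p) (snd q) (snd s)). nra.
Qed.

Lemma weighted_dist_xx a p : weighted_dist a p p = 0.
Proof. unfold weighted_dist. rewrite !ns_dist_xx. ring. Qed.

Lemma weighted_dist_ge0 a p q : 0 <= a -> 0 <= weighted_dist a p q.
Proof.
  intros Ha. unfold weighted_dist.
  pose proof (ns_dist_ge0 (fst p) (fst q)). pose proof (ns_dist_ge0 (snd p) (snd q)). nra.
Qed.

Lemma ns_dist_snd_le_weighted a p q : 0 < a ->
  ns_dist (snd p) (snd q) <= / a * weighted_dist a p q.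
Proof.
  intros Ha. unfold weighted_dist.
  rewrite Rmult_plus_distr_l, <- Rmult_assoc, Rinv_l, Rmult_1_l by lra.
  assert (0 <= / a * ns_dist (fst p) (fst q)).
  { apply Rmult_le_pos; [left; apply Rinv_0_lt_compat; lra | apply ns_dist_ge0]. }
  lra.
Qed.

End WeightedProduct.

Lemma weighted_dist_complete (X Y : BanachSpace) {a : R} (s : nat -> X * Y) : 0 < a ->
  (forall e, 0 < e -> exists N, forall m n, (N <= m)%nat -> (N <= n)%nat ->
     weighted_dist a (s m) (s n) < e) ->
  exists l, seq_lim (fun n => fst (s n)) (fst l) /\ seq_lim (fun n => snd (s n)) (snd l) /\
    forall e, 0 < e -> exists N, forall n, (N <= n)%nat -> weighted_dist a (s n) l < e.
Proof.
  intros Ha Hs.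
  assert (C1 : seq_cauchy (fun n => fst (s n))).
  { intros e He. destruct (Hs e He) as [N HN]. exists N. intros m n Hm Hn.
    specialize (HN m n Hm Hn). unfold weighted_dist in HN.
    pose proof (ns_dist_ge0 (snd (s m)) (snd (s n))). nra. }
  assert (C2 : seq_cauchy (fun n => snd (s n))).
  { intros e He. destruct (Hs (e * a)) as [N HN]; [nra|]. exists N. intros m n Hm Hn.
    specialize (HN m n Hm Hn). unfold weighted_dist in HN.
    pose proof (ns_dist_ge0 (fst (s m)) (fst (s n))).
    apply (Rmult_lt_reg_r a); lra. }
  destruct (bs_complete X C1) as [l1 L1]. destruct (bs_complete Y C2) as [l2 L2].
  exists (l1, l2). split; [exact L1|]. split; [exact L2|].
  intros e He. destruct (L1 (e / 2)) as [N1 H1]; [lra|].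
  destruct (L2 (e / (2 * a))) as [N2 H2]; [apply Rdiv_lt_0_compat; lra|].
  exists (Nat.max N1 N2). intros n Hn. unfold weighted_dist; simpl.
  specialize (H1 n ltac:(lia)). specialize (H2 n ltac:(lia)).
  assert (Ha2 : a * ns_dist (snd (s n)) l2 < a * (e / (2 * a)))
    by (apply Rmult_lt_compat_l; auto).
  replace (a * (e / (2 * a))) with (e / 2) in Ha2 by (field; lra). lra.
Qed.

Lemma graph_step_of_dist_DF_le {X Y : NormedSpace} {F : X -> Y -> Prop} {u : X} {w : Y}
  {c lam e m : R} {z : Y} :
  0 < e -> 0 < m -> dist_set_le z (DF_image_ball F u w c) lam ->
  exists T h a, 0 < T <= m /\ ns_norm h < c + e /\ ns_dist a z < lam + 2 * e /\
    F (ns_add u (ns_scal T h)) (ns_add w (ns_scal T a)).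
Proof.
  intros He Hm Hz.
  destruct (Hz e He) as [a0 [[h0 [Hh0 [t [hk [vk [Ht [_ [Htc [Lh [Lv Fk]]]]]]]]]] Hza0]].
  destruct (Lh e He) as [N1 HN1]. destruct (Lv e He) as [N2 HN2].
  destruct (Htc m Hm) as [N3 HN3].
  set (k := Nat.max N1 (Nat.max N2 N3)).
  specialize (HN1 k ltac:(unfold k; lia)). specialize (HN2 k ltac:(unfold k; lia)).
  specialize (HN3 k ltac:(unfold k; lia)).
  unfold R_dist in HN3. rewrite Rminus_0_r, Rabs_pos_eq in HN3 by (left; apply Ht).
  pose proof (ns_norm_le_dist (hk k) h0). pose proof (ns_dist_triangle (vk k) a0 z).
  rewrite ns_distC in Hza0.
  exists (t k), (hk k), (vk k). pose proof (Ht k).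
  repeat split; auto; lra.
Qed.

Definition metrically_regular_near {X Y : NormedSpace} (F : X -> Y -> Prop)
  (xb : X) (yb : Y) (r rho : R) : Prop :=
  forall x y v, F x y -> ns_dist x xb < rho -> ns_dist y yb < rho -> ns_dist v yb < rho ->
    exists u, F u v /\ r * ns_dist u x <= ns_dist y v.

Section MetricRegularity.

Variables (X Y : BanachSpace) (F : X -> Y -> Prop) (xb : X) (yb : Y).
Variables (c lam r delta r0 rad : R).
Hypothesis F_closed : forall (u : nat -> X) (w : nat -> Y) x y,
  (forall n, F (u n) (w n) /\ ns_dist (u n) xb <= r0 /\ ns_dist (w n) yb <= r0) ->
  seq_lim u x -> seq_lim w y -> ns_dist x xb <= r0 -> ns_dist y yb <= r0 -> F x y.
Hypothesis rad_gt0 : 0 < rad.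
Hypothesis rad_le_r0 : rad <= r0.
Hypothesis rad_lt_delta : rad < delta.
Hypothesis c_gt0 : 0 < c.
Hypothesis r_gt0 : 0 < r.
Hypothesis rc_lt : r * c < 1 - lam.
Hypothesis DF_dense : forall x y, F x y -> ns_dist x xb < delta -> ns_dist y yb < delta ->
  forall z : Y, ns_norm z = 1 -> dist_set_le z (DF_image_ball F x y c) lam.

(* [al] and [e] are chosen so that a step of length [T] toward [v] gains at least
   [T * kap / 2], see [step_toward_gain]. *)
Let kap := 1 - lam - r * c.
Let al := kap / (8 * r).
Let e := kap / (4 * (2 + r)).

Let kap_gt0 : 0 < kap.
Proof. unfold kap. lra. Qed.

Let al_gt0 : 0 < al.
Proof. unfold al. apply Rdiv_lt_0_compat; lra. Qed.

Let e_gt0 : 0 < e.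
Proof. unfold e. apply Rdiv_lt_0_compat; lra. Qed.

Let lam_2e_lt1 : lam + 2 * e < 1.
Proof.
  assert (Ee : e * (4 * (2 + r)) = kap) by (unfold e; field; lra).
  unfold kap in Ee. nra.
Qed.

Definition graph_ball (p : X * Y) : Prop :=
  F (fst p) (snd p) /\ ns_dist (fst p) xb <= rad /\ ns_dist (snd p) yb <= rad.

Lemma graph_ball_complete (s : nat -> X * Y) : (forall n, graph_ball (s n)) ->
  (forall e, 0 < e -> exists N, forall m n, (N <= m)%nat -> (N <= n)%nat ->
     weighted_dist al (s m) (s n) < e) ->
  exists l, graph_ball l /\
    forall e, 0 < e -> exists N, forall n, (N <= n)%nat -> weighted_dist al (s n) l < e.
Proof.
  intros Gs Cs. destruct (weighted_dist_complete X Y s al_gt0 Cs) as [[l1 l2] [L1 [L2 Ll]]].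
  exists (l1, l2). split; [|exact Ll].
  assert (B1 : ns_dist l1 xb <= rad) by (apply (seq_lim_dist_le L1); intros n; apply Gs).
  assert (B2 : ns_dist l2 yb <= rad) by (apply (seq_lim_dist_le L2); intros n; apply Gs).
  split; [|auto]. simpl in *.
  apply (F_closed (fun n => fst (s n)) (fun n => snd (s n))); auto; try lra.
  intros n. destruct (Gs n) as [? [? ?]]. repeat split; auto; lra.
Qed.

Lemma step_toward_gain {u : X} {w v : Y} {T : R} {h : X} {a : Y} :
  0 < T <= ns_dist w v -> ns_norm h < c + e -> ns_norm a < 2 ->
  ns_dist a (direction w v) < lam + 2 * e ->
  ns_dist (ns_add w (ns_scal T a)) v +
    r * weighted_dist al (ns_add u (ns_scal T h), ns_add w (ns_scal T a)) (u, w)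
  < ns_dist w v.
Proof.
  intros [HT0 Tn] Hh Ha Hdir. unfold weighted_dist; simpl.
  rewrite !ns_dist_addl, !ns_normZ_nonneg by lra.
  pose proof (ns_dist_step_toward w v a T (conj (Rlt_le _ _ HT0) Tn) ltac:(lra)) as Hstep.
  assert (HTd : T * ns_dist a (direction w v) < T * (lam + 2 * e))
    by (apply Rmult_lt_compat_l; lra).
  assert (Hcost : r * (T * ns_norm h + al * (T * ns_norm a)) < r * (T * (c + e) + al * (T * 2))).
  { apply Rmult_lt_compat_l; [lra|]. apply Rplus_lt_compat.
    - apply Rmult_lt_compat_l; lra.
    - apply Rmult_lt_compat_l; [lra|]. apply Rmult_lt_compat_l; lra. }
  assert (Hgain : - T + T * (lam + 2 * e) + r * (T * (c + e) + al * (T * 2)) = - (T * kap / 2))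
    by (unfold al, e, kap; field; lra).
  assert (0 < T * kap) by (apply Rmult_lt_0_compat; lra).
  lra.
Qed.

Lemma graph_ball_descent {u : X} {w v : Y} :
  F u w -> ns_dist u xb < rad -> ns_dist w yb < rad -> 0 < ns_dist w v ->
  exists q, graph_ball q /\ ns_dist (snd q) v + r * weighted_dist al q (u, w) < ns_dist w v.
Proof.
  intros Fuw Hu Hw Hn.
  set (m := Rmin (ns_dist w v)
              (Rmin ((rad - ns_dist u xb) / (c + e)) ((rad - ns_dist w yb) / 2))).
  assert (Hm : 0 < m)
    by (unfold m; repeat apply Rmin_pos; auto; apply Rdiv_lt_0_compat; lra).
  destruct (graph_step_of_dist_DF_le e_gt0 Hm
              (DF_dense u w Fuw ltac:(lra) ltac:(lra) _ (ns_norm_direction w v Hn)))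
    as [T [h [a [[HT0 HTm] [Hh [Ha Fq]]]]]].
  assert (Tn : T <= ns_dist w v) by (eapply Rle_trans; [exact HTm | apply Rmin_l]).
  assert (Tu : T * (c + e) <= rad - ns_dist u xb).
  { apply Rmult_le_of_le_div; [lra|].
    eapply Rle_trans; [exact HTm|]. eapply Rle_trans; [apply Rmin_r|apply Rmin_l]. }
  assert (Tw : T * 2 <= rad - ns_dist w yb).
  { apply Rmult_le_of_le_div; [lra|].
    eapply Rle_trans; [exact HTm|]. eapply Rle_trans; [apply Rmin_r|apply Rmin_r]. }
  assert (Ha2 : ns_norm a < 2).
  { pose proof (ns_norm_le_dist a (direction w v)) as Hle.
    rewrite ns_norm_direction in Hle by exact Hn. lra. }
  exists (ns_add u (ns_scal T h), ns_add w (ns_scal T a)).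
  split; [|exact (step_toward_gain (conj HT0 Tn) Hh Ha2 Ha)].
  pose proof (ns_dist_triangle (ns_add u (ns_scal T h)) u xb) as Hux.
  pose proof (ns_dist_triangle (ns_add w (ns_scal T a)) w yb) as Hwy.
  rewrite ns_dist_addl, ns_normZ_nonneg in Hux by lra.
  rewrite ns_dist_addl, ns_normZ_nonneg in Hwy by lra.
  assert (T * ns_norm h <= T * (c + e)) by (apply Rmult_le_compat_l; lra).
  assert (T * ns_norm a <= T * 2) by (apply Rmult_le_compat_l; lra).
  repeat split; simpl; auto; lra.
Qed.

Lemma metrically_regular_near_of_DF : metrically_regular_near F xb yb r (Rmin r 1 * rad / 4).
Proof.
  intros x y v Fxy Hx Hy Hv.
  assert (Hrho_r : Rmin r 1 * rad / 4 <= r * rad / 4) by (pose proof (Rmin_l r 1); nra).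
  assert (Hrho_1 : Rmin r 1 * rad / 4 <= rad / 4) by (pose proof (Rmin_r r 1); nra).
  assert (Hyv : ns_dist y v < r * rad / 2 /\ ns_dist y v < rad / 2).
  { pose proof (ns_dist_triangle y yb v) as Htri. rewrite (ns_distC yb v) in Htri. lra. }
  set (f := fun p : X * Y => ns_dist (snd p) v).
  destruct (@ekeland (X * Y) (weighted_dist al) graph_ball f (/ al) r)
    with (p0 := (x, y)) as [[u w] [Gps [E1 E2]]].
  - apply weighted_distC.
  - intros p q s. apply weighted_dist_triangle. lra.
  - apply weighted_dist_xx.
  - intros p q. apply weighted_dist_ge0. lra.
  - apply graph_ball_complete.
  - intros p. apply ns_dist_ge0.
  - left. apply Rinv_0_lt_compat, al_gt0.
  - intros p q. unfold f. pose proof (ns_dist_triangle (snd p) (snd q) v).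
    pose proof (ns_dist_snd_le_weighted al p q al_gt0). lra.
  - exact r_gt0.
  - split; [exact Fxy | simpl; lra].
  - unfold f, weighted_dist in E1; simpl in E1. destruct Gps as [Fuw [Hu Hw]]; simpl in *.
    assert (Hwd : 0 <= al * ns_dist w y) by (apply Rmult_le_pos; [lra | apply ns_dist_ge0]).
    assert (Hux : r * ns_dist u x <= ns_dist y v) by (pose proof (ns_dist_ge0 w v); nra).
    destruct (Rle_lt_or_eq_dec _ _ (ns_dist_ge0 w v)) as [Hwv|Hwv].
    + exfalso.
      assert (Hu' : ns_dist u xb < rad).
      { pose proof (ns_dist_triangle u x xb).
        assert (ns_dist u x < rad / 2) by (apply (Rmult_lt_reg_l r); lra). lra. }
      assert (Hw' : ns_dist w yb < rad).
      { pose proof (ns_dist_triangle w v yb). pose proof (ns_dist_ge0 u x). nra. }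
      destruct (graph_ball_descent Fuw Hu' Hw' Hwv) as [q [Gq Hq]].
      specialize (E2 q Gq). unfold f in E2. simpl in E2. lra.
    + symmetry in Hwv. apply ns_dist_eq0 in Hwv. subst w. exists u. auto.
Qed.

End MetricRegularity.

Lemma sur_admissible_of_metrically_regular {X Y : NormedSpace} (F : X -> Y -> Prop)
  (xb : X) (yb : Y) (r rho : R) :
  0 < r -> 0 < rho -> F xb yb -> metrically_regular_near F xb yb r rho ->
  sur_admissible F xb yb r.
Proof.
  intros Hr Hrho Fb Hreg.
  set (eps := rho / (2 + r)).
  assert (Heps : 0 < eps) by (unfold eps; apply Rdiv_lt_0_compat; lra).
  assert (Heps_rho : (2 + r) * eps = rho) by (unfold eps; field; lra).
  exists eps. split; [exact Heps|].
  intros x y t Fxy Hx Ht v Hvy Hvb.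
  rewrite ns_distC in Hvy.
  destruct (Rlt_dec (ns_dist y yb) rho) as [Hy|Hy].
  - destruct (Hreg x y v Fxy ltac:(nra) Hy ltac:(nra)) as [u [Fu Hu]].
    exists u. split; [|exact Fu]. apply (Rmult_lt_reg_l r); lra.
  - (* [y] is far from [yb], so [t] is large and a solution found from [(xb, yb)] will do. *)
    destruct (Hreg xb yb v Fb ltac:(rewrite ns_dist_xx; lra) ltac:(rewrite ns_dist_xx; lra)
                ltac:(nra)) as [u [Fu Hu]].
    exists u. split; [|exact Fu]. apply Rnot_lt_le in Hy.
    rewrite (ns_distC yb v) in Hu.
    pose proof (ns_dist_triangle y v yb) as Hyv.
    pose proof (ns_dist_triangle u xb x) as Hux. rewrite (ns_distC xb x) in Hux.
    assert (r * ns_dist u x <= r * ns_dist u xb + r * ns_dist x xb) by nra.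
    assert (r * ns_dist x xb < r * eps) by (apply Rmult_lt_compat_l; auto).
    apply (Rmult_lt_reg_l r); lra.
Qed.

Theorem mainTheorem7 (X Y : BanachSpace) (F : X -> Y -> Prop) (xb : X) (yb : Y)
  (c lam : R) :
  graph_locally_closed F ->
  F xb yb ->
  0 < c -> 0 <= lam -> lam < 1 ->
  (exists delta, 0 < delta /\
     forall (x : X) (y : Y), F x y -> ns_dist x xb < delta -> ns_dist y yb < delta ->
       forall z : Y, ns_norm z = 1 -> dist_set_le z (DF_image_ball F x y c) lam) ->
  sur_ge F xb yb ((1 - lam) / c).
Proof.
  intros Hgl Fb Hc _ Hl1 [delta [Hd HDF]] s Hs.
  destruct (Rlt_dec s 0) as [Hneg|Hnn]; [left; exact Hneg|right].
  set (r := (s + (1 - lam) / c) / 2).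
  assert (Hr : 0 < r) by (unfold r; pose proof (Rdiv_lt_0_compat (1 - lam) c); lra).
  assert (Hrc : r * c < (1 - lam) / c * c)
    by (apply Rmult_lt_compat_r; [exact Hc | unfold r; lra]).
  replace ((1 - lam) / c * c) with (1 - lam) in Hrc by (field; lra).
  destruct (Hgl xb yb Fb) as [r0 [Hr0 Hcl]].
  set (rad := Rmin r0 delta / 2).
  pose proof (Rmin_pos r0 delta Hr0 Hd) as Hmin_pos. pose proof (Rmin_l r0 delta) as Hmin_l.
  pose proof (Rmin_r r0 delta) as Hmin_r. pose proof (Rmin_pos r 1 Hr Rlt_0_1) as Hmin_r1.
  exists r. split; [exact Hr|]. split; [unfold r; lra|].
  apply (sur_admissible_of_metrically_regular F xb yb r (Rmin r 1 * rad / 4)); auto.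
  - unfold rad. nra.
  - apply (metrically_regular_near_of_DF X Y F xb yb c lam r delta r0 rad Hcl);
      auto; unfold rad; lra.
Qed.
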